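(* Let $\lambda_{\min}$ be the smallest nonzero eigenvalue of $L$. Then $N-m_V=M-m_H$, and $$\lambda_{\min}\le\frac{N}{N-m_V}=\frac{N}{M-m_H}\le\lambda_N.$$ Moreover, either of the two inequalities is an equality if and only if $\lambda_{\min}=\lambda_N$.
   Context: Let $\Gamma=(V,H,\mathcal C)$ be a hypergraph with real coefficients: $V=\{v_1,\dots,v_N\}$ is a finite set of vertices, $H=(h_1,\dots,h_M)$ is a finite family of subsets $h_j\subseteq V$ called hyperedges (repetitions allowed; hyperedges are distinguished by their index), and $\mathcal C=\{C_{v,h}\in\mathbb R\}$ is a family of real coefficients with $C_{v,h}=0$ if and only if $v\notin h$. Standing assumptions: every vertex lies in at least one hyperedge, and $\Gamma$ is connected. The degree of $v$ is $\deg v=\sum_{h\in H}C_{v,h}^2>0$. The vertex normalized Laplacian is $Lf(v)=\frac{1}{\deg v}\sum_{h\in H}C_{v,h}\sum_{w\in V}C_{w,h}f(w)$ for $f:V\to\mathbb R$; its eigenvalues (real and non-negative) are $\lambda_1\le\dots\le\lambda_N$. The hyperedge normalized Laplacian is $L^H\gamma(h)=\sum_{v\in V}\frac{C_{v,h}}{\deg v}\sum_{h'\in H}C_{v,h'}\gamma(h')$ for $\gamma:H\to\mathbb R$. Here $m_V$ and $m_H$ are the multiplicities of the eigenvalue $0$ of $L$ and of $L^H$ respectively. *)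

From mathcomp Require Import all_boot all_order all_algebra.
Set Implicit Arguments. Unset Strict Implicit. Unset Printing Implicit Defensive.
Import Order.TTheory GRing.Theory Num.Theory.
Local Open Scope ring_scope.

(* A hypergraph with real coefficients on vertex set 'I_N and hyperedge
   family 'I_M is encoded by its coefficient matrix C : 'M_(N, M),
   C v h = C_{v,h}; the hyperedge h is the set {v | C v h != 0}. *)
Section Hyper.
Variables (R : realFieldType) (N M : nat).
Variable C : 'M[R]_(N, M).

Definition hdeg (v : 'I_N) : R := \sum_(h < M) C v h ^+ 2.

Definition every_vertex_covered : Prop := forall v : 'I_N, exists h : 'I_M, C v h != 0.

Definition hadj : rel 'I_N := fun u w => [exists h : 'I_M, (C u h != 0) && (C w h != 0)].

Definition hconnected : Prop := forall u w : 'I_N, connect hadj u w.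

Definition vLap : 'M[R]_N :=
  \matrix_(v, w) ((hdeg v)^-1 * \sum_(h < M) C v h * C w h).

Definition hLap : 'M[R]_M :=
  \matrix_(h, h') (\sum_(v < N) C v h / hdeg v * C v h').

Definition mV : nat := mup 0 (char_poly vLap).
Definition mH : nat := mup 0 (char_poly hLap).
End Hyper.

From mathcomp Require Import all_boot all_order all_algebra.
From mathcomp Require Import zify.
Set Implicit Arguments. Unset Strict Implicit. Unset Printing Implicit Defensive.
Import Order.TTheory GRing.Theory Num.Theory.
Local Open Scope ring_scope.

(* Writing D for the diagonal degree matrix, the vertex Laplacian factors as
   L = (D^-1 C) C^T and the hyperedge Laplacian as L^H = C^T (D^-1 C).  For
   any rectangular A (n x m) and B (m x n) one has the Sylvester identity
   X^m chi_(AB) = X^n chi_(BA); comparing the multiplicity of the root 0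
   gives N - m_V = M - m_H, i.e. both Laplacians have the same number of
   nonzero eigenvalues (counted with multiplicity).
   Moreover tr L = sum_v deg v / deg v = N, so the N - m_V nonzero
   eigenvalues have mean N / (N - m_V).  A mean lies between the smallest
   and the largest entry, with equality on either side exactly when all
   entries coincide; this gives the inequalities and their equality cases. *)

Section Sylvester.
Variable F : fieldType.

(* Sylvester's determinant identity for characteristic polynomials: the
   block matrix P = [X a; b 1] is reduced to a block-triangular matrix in
   two ways, by left multiplication with [1 -a; 0 X] and with [1 0; -b X]. *)
Lemma char_poly_mulmxC n m (A : 'M[F]_(n, m)) (B : 'M[F]_(m, n)) :
  'X^m * char_poly (A *m B) = 'X^n * char_poly (B *m A).
Proof.
pose a := map_mx polyC A; pose b := map_mx polyC B.
pose P := block_mx ('X%:M) a b (1%:M : 'M[{poly F}]_m).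
have detL : \det (block_mx 1%:M (-a) 0 ('X%:M) *m P) = 'X^m * char_poly (A *m B).
  rewrite mulmx_block !mul1mx !mul0mx !add0r mulNmx mulmx1 addrN.
  by rewrite det_lblock mulmx1 det_scalar mulrC /char_poly /char_poly_mx map_mxM.
have detU : \det (block_mx 1%:M 0 (-b) ('X%:M) *m P) = 'X^n * char_poly (B *m A).
  rewrite mulmx_block !mul1mx !mul0mx !addr0 mulNmx mulmx1 scalar_mxC addNr.
  by rewrite det_ublock det_scalar /char_poly /char_poly_mx map_mxM addrC mulNmx.
by rewrite -detL -detU !det_mulmx det_ublock det_lblock !det_scalar.
Qed.

Lemma mup0_char_poly_mulmxC n m (A : 'M[F]_(n, m)) (B : 'M[F]_(m, n)) :
  (m + mup 0 (char_poly (A *m B)) = n + mup 0 (char_poly (B *m A)))%N.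
Proof.
have := congr1 (mup 0) (char_poly_mulmxC A B).
rewrite !mupM ?expf_neq0 ?polyX_eq0 ?monic_neq0 ?char_poly_monic //.
have X_sub0 : 'X = 'X - 0%:P :> {poly F} by rewrite subr0.
by rewrite X_sub0 !mup_XsubCX eqxx.
Qed.

End Sylvester.

Lemma sorted_le_last (d : Order.disp_t) (T : porderType d) (x0 : T) (s : seq T) :
  sorted <=%O s -> {in s, forall x, (x <= last x0 s)%O}.
Proof.
case/lastP: s => [//| s y]; rewrite last_rcons sorted_pairwise; last exact: le_trans.
rewrite pairwise_rcons => /andP [/allP le_y _] x.
by rewrite mem_rcons inE => /orP [/eqP -> | /le_y].
Qed.

Lemma sum_skip_zeros (V : nmodType) (s : seq V) : \sum_(x <- s | x != 0) x = \sum_(x <- s) x.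
Proof. by rewrite [RHS](bigID (fun x => x != 0)) /= [X in _ = _ + X]big1 ?addr0 // => x /negPn /eqP. Qed.

Section Mean.
Variable R : realFieldType.
Implicit Types (s : seq R) (c lo hi : R).

Definition mean s : R := (\sum_(x <- s) x) / (size s)%:R.

Lemma sum_sub_mean s c : s != [::] ->
  \sum_(x <- s) (x - c) = (mean s - c) * (size s)%:R.
Proof.
move=> s_nil; have size_gt0 : (size s)%:R != 0 :> R.
  by rewrite pnatr_eq0 size_eq0.
rewrite big_split /= sumrN big_const_seq iter_addr_0 count_predT.
by rewrite /mean mulrBl divfK // mulr_natr.
Qed.

Lemma mean_opp s : mean (map -%R s) = - mean s.
Proof. by rewrite /mean big_map sumrN size_map mulNr. Qed.

Lemma mean_ge s lo : s != [::] -> {in s, forall x, lo <= x} -> lo <= mean s.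
Proof.
move=> s_nil lo_le; rewrite -subr_ge0 -(pmulr_lge0 _ (_ : 0 < (size s)%:R)).
  by rewrite -sum_sub_mean // big_seq sumr_ge0 // => x /lo_le; rewrite subr_ge0.
by rewrite ltr0n lt0n size_eq0.
Qed.

Lemma mean_eq_lb s lo : {in s, forall x, lo <= x} -> mean s = lo ->
  {in s, forall x, x = lo}.
Proof.
have [-> //| s_nil] := eqVneq s [::]; move=> lo_le mean_lo.
have : \sum_(x <- s) (x - lo) == 0 by rewrite sum_sub_mean // mean_lo subrr mul0r.
rewrite big_seq_cond psumr_eq0 => [/allP all0 x xs|x /andP [/lo_le]].
  by apply/eqP; rewrite -subr_eq0; have := all0 x xs; rewrite xs.
by rewrite subr_ge0.
Qed.

Lemma mean_le s hi : s != [::] -> {in s, forall x, x <= hi} -> mean s <= hi.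
Proof.
move=> s_nil le_hi; rewrite -lerN2 -mean_opp mean_ge //.
  by rewrite -size_eq0 size_map size_eq0.
by move=> _ /mapP [x xs ->]; rewrite lerN2 le_hi.
Qed.

Lemma mean_eq_ub s hi : {in s, forall x, x <= hi} -> mean s = hi ->
  {in s, forall x, x = hi}.
Proof.
move=> le_hi mean_hi x xs; apply: oppr_inj.
apply: (@mean_eq_lb (map -%R s)); last exact: map_f.
  by move=> _ /mapP [y ys ->]; rewrite lerN2 le_hi.
by rewrite mean_opp mean_hi.
Qed.

Lemma mean_between s lo hi : lo \in s -> hi \in s ->
  {in s, forall x, lo <= x <= hi} ->
  [/\ lo <= mean s, mean s <= hi,
      lo = mean s <-> lo = hi & mean s = hi <-> lo = hi].
Proof.
move=> lo_s hi_s bounds.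
have s_nil : s != [::] by apply: contraTneq lo_s => ->.
have lo_le : {in s, forall x, lo <= x} by move=> x /bounds /andP [].
have le_hi : {in s, forall x, x <= hi} by move=> x /bounds /andP [].
have lo_mean := mean_ge s_nil lo_le; have mean_hi := mean_le s_nil le_hi.
split=> //; split=> [mean_lo | lo_hi].
- by rewrite [RHS](mean_eq_lb lo_le).
- by apply/le_anti; rewrite lo_mean lo_hi mean_hi.
- by rewrite [LHS](mean_eq_ub le_hi).
- by apply/le_anti; rewrite mean_hi -lo_hi lo_mean.
Qed.

End Mean.

Section SplitCharPoly.
Variables (R : fieldType) (n : nat) (A : 'M[R]_n) (s : seq R).
Hypothesis char_split : char_poly A = \prod_(x <- s) ('X - x%:P).

Lemma size_split_char_poly : size s = n.
Proof. by apply: succn_inj; rewrite -(size_prod_XsubC s id) -char_split size_char_poly. Qed.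

Lemma sum_split_char_poly : (0 < n)%N -> \sum_(x <- s) x = \tr A.
Proof.
move=> n_gt0; apply: oppr_inj; rewrite -char_poly_trace // char_split.
by rewrite -size_split_char_poly coefPn_prod_XsubC // size_split_char_poly -lt0n.
Qed.

Lemma mup0_split_char_poly : mup 0 (char_poly A) = count_mem 0 s.
Proof. by rewrite char_split mu_prod_XsubC. Qed.

End SplitCharPoly.

Section Laplacians.
Variables (R : realFieldType) (N M : nat) (C : 'M[R]_(N, M)).

Definition normC : 'M[R]_(N, M) := \matrix_(v, h) ((hdeg C v)^-1 * C v h).

Lemma vLap_factor : vLap C = normC *m C^T.
Proof.
apply/matrixP => v w; rewrite !mxE mulr_sumr.
by apply: eq_bigr => h _; rewrite !mxE mulrA.
Qed.

Lemma hLap_factor : hLap C = C^T *m normC.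
Proof. by apply/matrixP => h h'; rewrite !mxE; apply: eq_bigr => v _; rewrite !mxE mulrA. Qed.

Lemma count_nonzero_eigenvalues : (N - mV C = M - mH C)%N.
Proof.
have := mup0_char_poly_mulmxC normC C^T.
rewrite -vLap_factor -hLap_factor -/(mV C) -/(mH C); lia.
Qed.

Hypothesis covered : every_vertex_covered C.

Lemma hdeg_neq0 v : hdeg C v != 0.
Proof.
have [h Cvh] := covered v; apply: contra Cvh => /eqP deg0.
rewrite -sqrf_eq0; apply/eqP.
exact: (psumr_eq0P (fun h _ => sqr_ge0 (C v h)) deg0).
Qed.

(* Each diagonal entry of L is deg v / deg v = 1, so tr L = N. *)
Lemma mxtrace_vLap : \tr (vLap C) = N%:R.
Proof.
rewrite /mxtrace (eq_bigr (fun=> 1)) ?sumr_const ?card_ord // => v _.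
rewrite mxE (eq_bigr (fun h => C v h ^+ 2)) => [|h _]; last by rewrite expr2.
exact: mulVf (hdeg_neq0 v).
Qed.

End Laplacians.

Theorem mainTheorem10 (R : realFieldType) (N M : nat) (C : 'M[R]_(N, M))
  (HN : (0 < N)%N)
  (Hcov : every_vertex_covered C)
  (Hconn : hconnected C)
  (lam : seq R)
  (Hsize : size lam = N)
  (Hsorted : sorted <=%R lam)
  (Heig : char_poly (vLap C) = \prod_(x <- lam) ('X - x%:P))
  (lmin : R)
  (Hlmin_in : lmin \in lam) (Hlmin_nz : lmin != 0)
  (Hlmin_le : forall x, x \in lam -> x != 0 -> lmin <= x) :
  let lamN := last 0 lam in
  let rV : R := N%:R / (N - mV C)%:R in
  let rH : R := N%:R / (M - mH C)%:R in
  (N - mV C = M - mH C)%N /\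
  lmin <= rV /\
  rV = rH /\
  rH <= lamN /\
  (lmin = rV <-> lmin = lamN) /\
  (rH = lamN <-> lmin = lamN).
Proof.
move=> lamN rV rH; rewrite /rH -count_nonzero_eigenvalues -/rV.
pose s := [seq x <- lam | x != 0].
have size_s : size s = (N - mV C)%N.
  rewrite size_filter /mV (mup0_split_char_poly Heig) -Hsize.
  by rewrite -(count_predC (pred1 0)) addKn.
have sum_s : \sum_(x <- s) x = N%:R.
  by rewrite big_filter sum_skip_zeros (sum_split_char_poly Heig HN) mxtrace_vLap.
have mean_s : mean s = rV by rewrite /mean sum_s size_s.
have lmin_s : lmin \in s by rewrite mem_filter Hlmin_nz.
have bounds : {in s, forall x, lmin <= x <= lamN}.
  move=> x; rewrite mem_filter => /andP [x_nz x_lam].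
  by rewrite Hlmin_le // (sorted_le_last 0 Hsorted).
(* lamN is nonzero since it bounds the positive mean rV from above. *)
have lamN_s : lamN \in s.
  have s_nil : s != [::] by apply: contraTneq lmin_s => ->.
  have rV_gt0 : 0 < rV by rewrite -mean_s /mean sum_s divr_gt0 ?ltr0n // lt0n size_eq0.
  have rV_le : rV <= lamN by rewrite -mean_s mean_le // => x /bounds /andP [].
  have lamN_nz : lamN != 0 by rewrite gt_eqF ?(lt_le_trans rV_gt0).
  have := mem_last 0 lam; rewrite -/lamN inE (negbTE lamN_nz) /= => lamN_lam.
  by rewrite mem_filter lamN_nz.
have [lmin_le le_lamN eq_lo eq_hi] := mean_between lmin_s lamN_s bounds.
by rewrite -mean_s.
Qed.
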